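(* (i) If $\mathcal{U}$ is a subspace of $\mathbb{R}^n$ with $\mu(\mathcal{U})<1/2$, then $\mathcal{U}$ is realizable. (ii) For every $\alpha\in(1/2,1]$ there is a subspace $\mathcal{U}$ (of some $\mathbb{R}^n$) with $\mu(\mathcal{U})=\alpha$ that is not realizable.
   Context: For a subspace $\mathcal{U}\subseteq\mathbb{R}^n$, $P_{\mathcal{U}}$ denotes the orthogonal projector onto $\mathcal{U}$ and the coherence of $\mathcal{U}$ is $\mu(\mathcal{U})=\max_{i\in\{1,\dots,n\}}\|P_{\mathcal{U}}e_i\|_2^2$, where $e_i$ is the $i$-th standard basis vector. A correlation matrix is a positive semidefinite matrix with all diagonal entries equal to $1$; $\mathcal{U}$ is realizable if there is an $n\times n$ correlation matrix whose nullspace contains $\mathcal{U}$. *)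

(* Vectors of R^n are column vectors 'cV[R]_n; a subspace U of
   R^n is represented as the row space of a matrix U : 'M[R]_(m, n)
   (its rows, transposed, span the subspace). *)
From HB Require Import structures.
From mathcomp Require Import all_boot all_order all_algebra.
From mathcomp Require Import reals.
Set Implicit Arguments. Unset Strict Implicit. Unset Printing Implicit Defensive.
Import Order.TTheory GRing.Theory Num.Theory.
Local Open Scope ring_scope.

Section Defs.
Variable R : realType.

Definition sqnorm n (v : 'cV[R]_n) : R := \sum_(j < n) v j 0 ^+ 2.

Definition std_basis n (i : 'I_n) : 'cV[R]_n := delta_mx i 0.

Definition orth_proj m n (U : 'M[R]_(m, n)) : 'M[R]_n :=
  let B := row_base U in (B^T *m invmx (B *m B^T)) *m B.

Definition coherence m n (U : 'M[R]_(m, n)) : R :=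
  \big[Num.max/0]_(i < n) sqnorm (orth_proj U *m std_basis i).

Definition psd n (C : 'M[R]_n) : Prop :=
  C^T = C /\ forall x : 'cV[R]_n, 0 <= (x^T *m C *m x) 0 0.

Definition correlation_matrix n (C : 'M[R]_n) : Prop :=
  psd C /\ forall i : 'I_n, C i i = 1.

Definition realizable m n (U : 'M[R]_(m, n)) : Prop :=
  exists C : 'M[R]_n, correlation_matrix C /\
    forall v : 'rV[R]_n, (v <= U)%MS -> C *m v^T = 0.

End Defs.

(* For (i), let Q = I - P_U be the projector onto the orthogonal complement of U;
   its diagonal is at least s := 1 - mu(U) > 1/2.  We look for a correlation
   matrix of the form C = Q D Q with D = diag(d) >= 0, which is PSD and kills U.
   With e_j := Q_jj^2 d_j the unit-diagonal conditions read (I + W) e = 1, where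
   W_ij = Q_ij^2 / Q_jj^2 off the diagonal.  Idempotence gives
   sum_(j != i) Q_ij^2 = Q_ii - Q_ii^2 <= s - s^2, so the rows of W sum to at most
   (1 - s)/s < 1; then I + W is invertible and a minimum principle shows e >= 0.
   For (ii), the line spanned by (sqrt alpha, sqrt (1 - alpha)) in R^2 has
   coherence alpha, while a 2x2 correlation matrix [[1, c], [c, 1]] annihilating
   (a, b) forces a^2 = b^2. *)
From HB Require Import structures.
From mathcomp Require Import all_boot all_order all_algebra.
From mathcomp Require Import reals.
From mathcomp Require Import ring lra.
Set Implicit Arguments. Unset Strict Implicit. Unset Printing Implicit Defensive.
Import Order.TTheory GRing.Theory Num.Theory.
Local Open Scope ring_scope.

Section OrthogonalProjector.
Variable R : realType.

Lemma gram_eq0 k (v : 'rV[R]_k) : (v *m v^T) 0 0 = 0 -> v = 0.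
Proof.
rewrite mxE => /psumr_eq0P sq0; apply/matrixP => i j; rewrite (ord1 i) mxE.
have /eqP : v 0 j * v^T j 0 = 0 by apply: sq0 => // l _; rewrite mxE -expr2 sqr_ge0.
by rewrite mxE -expr2 sqrf_eq0 => /eqP.
Qed.

Lemma gram_unitmx m n (B : 'M[R]_(m, n)) : row_free B -> B *m B^T \in unitmx.
Proof.
move=> freeB; rewrite -row_free_unit; apply: inj_row_free => v vG0.
apply: (row_free_inj freeB); rewrite mul0mx; apply: gram_eq0.
by rewrite trmx_mul mulmxA -(mulmxA v) vG0 mul0mx mxE.
Qed.

Variables (m n : nat) (U : 'M[R]_(m, n)).
Local Notation P := (orth_proj U).

Lemma orth_proj_sym : P^T = P.
Proof.
rewrite /orth_proj; move: (row_base U) => B.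
by rewrite !trmx_mul trmxK trmx_inv trmx_mul trmxK mulmxA.
Qed.

Lemma orth_proj_idem : P *m P = P.
Proof.
rewrite /orth_proj; move: (row_base U) (gram_unitmx (row_base_free U)) => B uG.
by rewrite !mulmxA -(mulmxA _ B) -(mulmxA _ (B *m B^T)) mulmxV // mulmx1.
Qed.

Lemma orth_proj_fix k (A : 'M[R]_(k, n)) : (A <= U)%MS -> P *m A^T = A^T.
Proof.
move=> AU; have /submxP[D ->] : (A <= row_base U)%MS by rewrite eq_row_base.
rewrite /orth_proj.
move: (row_base U) (gram_unitmx (row_base_free U)) D => B uG D.
by rewrite trmx_mul -!mulmxA (mulmxA B) (mulmxA (invmx _)) mulVmx // mul1mx.
Qed.

Lemma orth_proj_kill k (X : 'M[R]_(n, k)) : U *m X = 0 -> P *m X = 0.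
Proof.
move=> UX0; have /submxP[D BD] : (row_base U <= U)%MS by rewrite eq_row_base.
by rewrite /orth_proj; move: (row_base U) BD => B ->; rewrite -!mulmxA UX0 !mulmx0.
Qed.

Lemma sqnorm_orth_proj i : sqnorm (P *m std_basis R i) = P i i.
Proof.
have Psym a b : P a b = P b a by rewrite -{1}orth_proj_sym mxE.
rewrite /sqnorm /std_basis -colE -{2}orth_proj_idem mxE.
by apply: eq_bigr => j _; rewrite mxE expr2 Psym.
Qed.

Lemma orth_proj_diag_le_coherence i : P i i <= coherence U.
Proof. by rewrite -sqnorm_orth_proj; exact: le_bigmax. Qed.

End OrthogonalProjector.

Lemma iterate_lower_bound_gt0 (R : realType) (rho x : R) :
  0 <= rho -> rho < 1 -> 1 - rho * (1 - rho * x) <= x -> 0 < x.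
Proof.
move=> rho_ge0 rho_lt1 hx.
have pos : 0 < (1 - rho) * (1 + rho) by rewrite mulr_gt0 // ?subr_gt0 // ltr_wpDr.
by rewrite -(pmulr_lgt0 _ pos); lra.
Qed.

Section SubstochasticSystem.
Variables (R : realType) (n : nat) (W : 'M[R]_n) (rho : R).
Hypothesis rho_lt1 : rho < 1.
Hypothesis W_ge0 : forall i j, 0 <= W i j.
Hypothesis W_rowsum : forall i, \sum_j W i j <= rho.

Lemma addW_inj (x : 'cV[R]_n) : x + W *m x = 0 -> x = 0.
Proof.
move=> x0; apply/matrixP => j0 z; rewrite (ord1 z) mxE.
have [k _ kmax] := @arg_maxP _ R _ j0 predT (fun i => `|x i 0|) isT.
have xk : x k 0 = - \sum_j W k j * x j 0.
  have := congr1 (fun M : 'cV[R]_n => M k 0) x0; rewrite !mxE => /eqP.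
  by rewrite addr_eq0 => /eqP.
have xk_le : `|x k 0| <= rho * `|x k 0|.
  rewrite {1}xk normrN (le_trans (ler_norm_sum _ _ _)) //.
  apply: (@le_trans _ _ (\sum_j W k j * `|x k 0|)); last first.
    by rewrite -mulr_suml ler_wpM2r.
  by apply: ler_sum => j _; rewrite normrM ger0_norm // ler_wpM2l //; exact: kmax.
have xk0 : `|x k 0| <= 0.
  by rewrite -(@pmulr_rle0 _ (1 - rho)) ?subr_gt0 // mulrBl mul1r subr_le0.
by apply/eqP; rewrite -normr_le0 (le_trans (kmax j0 isT)).
Qed.

Lemma addW_unitmx : 1%:M + W \in unitmx.
Proof.
rewrite -unitmx_tr -row_free_unit; apply: inj_row_free => v v0.
rewrite -[v]trmxK (@addW_inj v^T) ?trmx0 //.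
by have := congr1 trmx v0; rewrite trmx_mul trmxK trmx0 mulmxDl mul1mx.
Qed.

(* Minimum principle: if the least entry e_k were negative, every entry would be
   at most 1 - rho e_k, and then e_k >= 1 - rho (1 - rho e_k), i.e.
   (1 - rho^2) e_k >= 1 - rho > 0. *)
Lemma addW_solution_ge0 (e : 'cV[R]_n) :
  e + W *m e = const_mx 1 -> forall i, 0 <= e i 0.
Proof.
move=> eqe i.
have ei l : e l 0 = 1 - \sum_j W l j * e j 0.
  by have := congr1 (fun M : 'cV[R]_n => M l 0) eqe; rewrite !mxE => <-; rewrite addrK.
have [k _ kmin] := @arg_minP _ R _ i predT (fun l => e l 0) isT.
apply: le_trans (kmin i isT); rewrite leNgt; apply/negP => ek_lt0.
have rho_ge0 : 0 <= rho := le_trans (sumr_ge0 _ (fun j _ => W_ge0 i j)) (W_rowsum i).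
have e_le l : e l 0 <= 1 - rho * e k 0.
  rewrite ei lerD2l lerN2.
  apply: le_trans (ler_sum _ (fun j _ => ler_wpM2l (W_ge0 l j) (kmin j isT))).
  by rewrite -mulr_suml ler_wnM2r ?W_rowsum // ltW.
have : 1 - rho * (1 - rho * e k 0) <= e k 0.
  rewrite [leRHS]ei lerD2l lerN2.
  apply: (le_trans (ler_sum _ (fun j _ => ler_wpM2l (W_ge0 k j) (e_le j)))).
  by rewrite -mulr_suml ler_wpM2r ?W_rowsum //; nra.
by move/(iterate_lower_bound_gt0 rho_ge0 rho_lt1); rewrite ltNge (ltW ek_lt0).
Qed.

Lemma addW_nonneg_solution : exists e : 'cV[R]_n,
  (forall i, 0 <= e i 0) /\ e + W *m e = const_mx 1.
Proof.
pose e : 'cV[R]_n := invmx (1%:M + W) *m const_mx 1.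
have sol : e + W *m e = const_mx 1.
  by rewrite -{1}(mul1mx e) -mulmxDl /e mulmxA mulmxV ?mul1mx ?addW_unitmx.
by exists e; split; first exact: addW_solution_ge0.
Qed.

End SubstochasticSystem.

Lemma psd_trmx_diag_mul (R : realType) m n (A : 'M[R]_(m, n)) (d : 'rV[R]_m) :
  (forall j, 0 <= d 0 j) -> psd (A^T *m diag_mx d *m A).
Proof.
move=> d_ge0; split; first by rewrite !trmx_mul tr_diag_mx trmxK mulmxA.
move=> x; have -> : x^T *m (A^T *m diag_mx d *m A) *m x =
                    (A *m x)^T *m diag_mx d *m (A *m x) by rewrite trmx_mul !mulmxA.
rewrite mul_mx_diag mxE.
by apply: sumr_ge0 => j _; rewrite !mxE mulrAC -expr2 mulr_ge0 ?sqr_ge0.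
Qed.

Lemma subr_sqr_le_half (R : realType) (s q : R) :
  1 / 2 < s -> s <= q -> q - q ^+ 2 <= (1 - s) * s.
Proof.
move=> s_gt_half s_le_q.
have : 0 <= (q - s) * (q + s - 1) by rewrite mulr_ge0 ?subr_ge0 //; lra.
lra.
Qed.

Lemma ltr_1Bdiv_half (R : realType) (s : R) : 1 / 2 < s -> (1 - s) / s < 1.
Proof. by move=> s_gt_half; rewrite ltr_pdivrMr ?mul1r; lra. Qed.

Section ProjectorCorrelation.
Variables (R : realType) (n : nat) (Q : 'M[R]_n).
Hypothesis Q_sym : Q^T = Q.
Hypothesis Q_idem : Q *m Q = Q.

Let Qsym i j : Q j i = Q i j.
Proof. by rewrite -{1}Q_sym mxE. Qed.

Lemma sumsq_row_idem i : \sum_j Q i j ^+ 2 = Q i i.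
Proof. by rewrite -{2}Q_idem mxE; apply: eq_bigr => j _; rewrite expr2 Qsym. Qed.

Lemma diag_entry_mul_diag_mx (d : 'rV[R]_n) i :
  (Q *m diag_mx d *m Q) i i = \sum_j Q i j ^+ 2 * d 0 j.
Proof.
by rewrite mxE; apply: eq_bigr => j _; rewrite mul_mx_diag !mxE Qsym mulrAC expr2.
Qed.

Variable s : R.
Hypothesis s_gt_half : 1 / 2 < s.
Hypothesis Q_diag_ge : forall i, s <= Q i i.

Let s_gt0 : 0 < s. Proof. by apply: lt_trans s_gt_half; rewrite divr_gt0. Qed.
Let Q_diag_gt0 i : 0 < Q i i. Proof. exact: lt_le_trans s_gt0 (Q_diag_ge i). Qed.

Definition projector_weights : 'M[R]_n :=
  \matrix_(i, j) (if i == j then 0 else Q i j ^+ 2 / Q j j ^+ 2).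

Lemma projector_weights_ge0 i j : 0 <= projector_weights i j.
Proof. by rewrite mxE; case: eqP => // _; rewrite divr_ge0 ?sqr_ge0. Qed.

Lemma projector_weights_rowsum i : \sum_j projector_weights i j <= (1 - s) / s.
Proof.
rewrite (bigD1 i) //= mxE eqxx add0r.
apply: (@le_trans _ _ (\sum_(j | j != i) Q i j ^+ 2 / s ^+ 2)).
  apply: ler_sum => j ji; rewrite mxE eq_sym (negbTE ji) ler_wpM2l ?sqr_ge0 //.
  rewrite lef_pV2 ?posrE ?exprn_gt0 // !expr2.
  by apply: ler_pM; rewrite ?(ltW s_gt0) ?Q_diag_ge.
have offdiag : \sum_(j | j != i) Q i j ^+ 2 = Q i i - Q i i ^+ 2.
  have := sumsq_row_idem i; rewrite (bigD1 i) //= => sum_eq.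
  by rewrite -{1}sum_eq addrAC subrr add0r.
rewrite -mulr_suml offdiag ler_pdivrMr ?exprn_gt0 // expr2 mulrA divfK ?gt_eqF //.
exact: subr_sqr_le_half.
Qed.

Lemma projector_correlation : exists C : 'M[R]_n,
  correlation_matrix C /\ forall x : 'cV[R]_n, Q *m x = 0 -> C *m x = 0.
Proof.
have [e [e_ge0 eqe]] := addW_nonneg_solution (ltr_1Bdiv_half s_gt_half)
  projector_weights_ge0 projector_weights_rowsum.
pose d := \row_j (e j 0 / Q j j ^+ 2).
exists (Q *m diag_mx d *m Q); split; last by move=> x Qx0; rewrite -mulmxA Qx0 mulmx0.
split=> [|i].
  by rewrite -{1}Q_sym; apply: psd_trmx_diag_mul => j; rewrite mxE divr_ge0 ?sqr_ge0.
rewrite diag_entry_mul_diag_mx; have := congr1 (fun M : 'cV[R]_n => M i 0) eqe.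
rewrite -{1}[e]mul1mx -mulmxDl !mxE => <-.
apply: eq_bigr => j _; rewrite !mxE.
have Qjj_neq0 : Q j j != 0 by rewrite gt_eqF.
by case: eqVneq => [->|_]; rewrite ?mulr1n ?mulr0n ?addr0 ?add0r; field.
Qed.

End ProjectorCorrelation.

Lemma realizable_of_coherence_lt_half (R : realType) m n (U : 'M[R]_(m, n)) :
  coherence U < 1 / 2 -> realizable U.
Proof.
move=> coh_lt_half; set P := orth_proj U.
have Q_sym : (1%:M - P)^T = 1%:M - P by rewrite linearB /= trmx1 orth_proj_sym.
have Q_idem : (1%:M - P) *m (1%:M - P) = 1%:M - P.
  by rewrite mulmxBl mul1mx mulmxBr mulmx1 orth_proj_idem subrr subr0.
have s_gt_half : 1 / 2 < 1 - coherence U by lra.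
have Q_diag_ge i : 1 - coherence U <= (1%:M - P) i i.
  by rewrite mxE [(- P) i i]mxE mxE eqxx mulr1n lerD2l lerN2 orth_proj_diag_le_coherence.
have [C [corrC QC]] := projector_correlation Q_sym Q_idem s_gt_half Q_diag_ge.
by exists C; split=> // v vU; apply: QC; rewrite mulmxBl mul1mx orth_proj_fix ?subrr.
Qed.

Lemma orth_proj_unit_row (R : realType) n (u : 'rV[R]_n) :
  u *m u^T = 1%:M -> orth_proj u = u^T *m u.
Proof.
move=> uu1; have u_kill : u *m (1%:M - u^T *m u) = 0.
  by rewrite mulmxBr mulmx1 mulmxA uu1 mul1mx subrr.
rewrite -[orth_proj u]mulmx1 -(subrK (u^T *m u) 1%:M) mulmxDr orth_proj_kill // add0r.
by rewrite mulmxA orth_proj_fix.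
Qed.

Lemma coherence_unit_row (R : realType) n (u : 'rV[R]_n) :
  u *m u^T = 1%:M -> coherence u = \big[Num.max/0]_i u 0 i ^+ 2.
Proof.
move=> uu1; apply: eq_bigr => i _.
by rewrite sqnorm_orth_proj orth_proj_unit_row // mxE big_ord1 mxE expr2.
Qed.

Lemma big_ord2 (T : Type) (idx : T) (op : T -> T -> T) (F : 'I_2 -> T) :
  \big[op/idx]_(i < 2) F i = op (F 0) (op (F 1) idx).
Proof.
by rewrite !big_ord_recl big_ord0; congr (op (F _) (op (F _) _)); apply: val_inj.
Qed.

Lemma realizable_row2_sqr_eq (R : realType) (u : 'rV[R]_2) :
  realizable u -> u 0 0 ^+ 2 = u 0 1 ^+ 2.
Proof.
case=> C [[[C_sym _] C_diag] C_ker]; have /matrixP Cu := C_ker u (submx_refl u).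
have C10 : C 1 0 = C 0 1 by rewrite -{1}C_sym mxE.
have := Cu 0 0; have := Cu 1 0.
rewrite !mxE !big_ord2 !mxE !C_diag C10.
move: (C 0 1) => c; rewrite !mul1r !addr0 => e1 e0.
apply/eqP; rewrite -subr_eq0.
have -> : u 0 0 ^+ 2 - u 0 1 ^+ 2 =
          u 0 0 * (u 0 0 + c * u 0 1) - u 0 1 * (c * u 0 0 + u 0 1) by ring.
by rewrite e0 e1 !mulr0 subrr.
Qed.

Lemma not_realizable_of_coherence (R : realType) (alpha : R) :
  1 / 2 < alpha -> alpha <= 1 ->
  exists u : 'rV[R]_2, coherence u = alpha /\ ~ realizable u.
Proof.
move=> alpha_gt_half alpha_le1.
pose u : 'rV[R]_2 := \row_j (if j == 0 then Num.sqrt alpha else Num.sqrt (1 - alpha)).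
have u0 : u 0 0 ^+ 2 = alpha by rewrite mxE eqxx sqr_sqrtr //; lra.
have u1 : u 0 1 ^+ 2 = 1 - alpha by rewrite mxE /= sqr_sqrtr //; lra.
clearbody u.
have uu1 : u *m u^T = 1%:M.
  apply/matrixP => i j; rewrite !ord1 !mxE big_ord2 !mxE -!expr2.
  by rewrite u0 u1 addr0 subrKC.
exists u; split; last by move/realizable_row2_sqr_eq; rewrite u0 u1; lra.
rewrite coherence_unit_row // big_ord2 u0 u1.
by rewrite max_l ?max_l //; lra.
Qed.

Theorem theorem4p2 (R : realType) :
  (forall (m n : nat) (U : 'M[R]_(m, n)),
      coherence U < 1 / 2 -> realizable U) /\
  (forall alpha : R, 1 / 2 < alpha -> alpha <= 1 ->
      exists (m n : nat) (U : 'M[R]_(m, n)),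
        coherence U = alpha /\ ~ realizable U).
Proof.
split=> [m n U|alpha alpha_gt_half alpha_le1].
  exact: realizable_of_coherence_lt_half.
have [u [coh_u not_real_u]] := not_realizable_of_coherence alpha_gt_half alpha_le1.
by exists 1%N, 2%N, u.
Qed.
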